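(* Let $\mathsf V=(\mathsf V,\otimes,k)$ be a quantale whose underlying lattice is a Heyting algebra. The following are equivalent: (i) for all $u,v,w\in\mathsf V$, $w\wedge(u\otimes v)=\bigvee\{u'\otimes v'\mid u'\le u,\ v'\le v,\ u'\otimes v'\le w\}$; (ii) every injective $\mathsf V$-category is exponentiable in $\mathsf{Cat}(\mathsf V)$; (iii) the $\mathsf V$-category $(\mathsf V,\hom)$ is exponentiable in $\mathsf{Cat}(\mathsf V)$.
   Context: A quantale $\mathsf V=(\mathsf V,\otimes,k)$ is a complete anti-symmetric lattice with an associative, commutative binary operation $\otimes$ with neutral element $k$ distributing over arbitrary suprema; $\hom(u,-)$ is the right adjoint of $u\otimes-$. A $\mathsf V$-category $(X,a)$ is a set with $a:X\times X\to\mathsf V$ such that $k\le a(x,x)$ and $a(x,y)\otimes a(y,z)\le a(x,z)$; a $\mathsf V$-functor $f:(X,a)\to(Y,b)$ is a map with $a(x,y)\le b(f(x),f(y))$; these form the category $\mathsf{Cat}(\mathsf V)$. $f$ is fully faithful if $a(x,y)=b(f(x),f(y))$. The binary product of $(X,a)$ and $(Y,b)$ in $\mathsf{Cat}(\mathsf V)$ is $X\times Y$ with structure $a(x,x')\wedge b(y,y')$. For $\mathsf V$-functors $f,g:X\to Y$, $f\le g$ means $k\le b(f(x),g(x))$ for all $x$, and $f\simeq g$ means $f\le g$ and $g\le f$. A $\mathsf V$-category $X$ is injective if for every fully faithful $\mathsf V$-functor $i:A\to B$ and every $\mathsf V$-functor $f:A\to X$ there is a $\mathsf V$-functor $g:B\to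 X$ with $g\cdot i\simeq f$. $X$ is exponentiable if the functor $X\times-:\mathsf{Cat}(\mathsf V)\to\mathsf{Cat}(\mathsf V)$ has a right adjoint. *)

Record Quantale := {
  qcar :> Type;
  qle : qcar -> qcar -> Prop;
  qsup : (qcar -> Prop) -> qcar;
  qtensor : qcar -> qcar -> qcar;
  qk : qcar;
  qle_refl : forall u, qle u u;
  qle_trans : forall u v w, qle u v -> qle v w -> qle u w;
  qle_antisym : forall u v, qle u v -> qle v u -> u = v;
  qsup_ub : forall (S : qcar -> Prop) u, S u -> qle u (qsup S);
  qsup_least : forall (S : qcar -> Prop) v, (forall u, S u -> qle u v) -> qle (qsup S) v;
  qtensor_assoc : forall u v w, qtensor u (qtensor v w) = qtensor (qtensor u v) w;
  qtensor_comm : forall u v, qtensor u v = qtensor v u;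
  qtensor_unit : forall u, qtensor qk u = u;
  qtensor_sup : forall u (S : qcar -> Prop),
      qtensor u (qsup S) = qsup (fun z => exists s, S s /\ z = qtensor u s)
}.

Section QDefs.
Variable V : Quantale.

Definition qmeet (u v : V) : V := @qsup V (fun w => @qle V w u /\ @qle V w v).

Definition qhom (u v : V) : V := @qsup V (fun w => @qle V (@qtensor V u w) v).

Definition heyting : Prop :=
  forall u v : V, exists h : V, forall w : V, @qle V (qmeet w u) v <-> @qle V w h.

(* raw V-valued structures; V-categories are those satisfying is_vcat *)
Record VStruct := { vcar :> Type; vhom : vcar -> vcar -> V }.

Definition is_vcat (X : VStruct) : Prop :=
  (forall x : X, @qle V (@qk V) (@vhom X x x)) /\
  (forall x y z : X, @qle V (@qtensor V (@vhom X x y) (@vhom X y z)) (@vhom X x z)).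

Definition is_vfunctor (X Y : VStruct) (f : X -> Y) : Prop :=
  forall x x' : X, @qle V (@vhom X x x') (@vhom Y (f x) (f x')).

Definition fully_faithful (X Y : VStruct) (f : X -> Y) : Prop :=
  forall x x' : X, @vhom X x x' = @vhom Y (f x) (f x').

Definition vfun_le (X Y : VStruct) (f g : X -> Y) : Prop :=
  forall x : X, @qle V (@qk V) (@vhom Y (f x) (g x)).

Definition vfun_iso (X Y : VStruct) (f g : X -> Y) : Prop :=
  vfun_le X Y f g /\ vfun_le X Y g f.

Definition vprod (X Y : VStruct) : VStruct :=
  {| vcar := (vcar X * vcar Y)%type;
     vhom := fun p q => qmeet (@vhom X (fst p) (fst q)) (@vhom Y (snd p) (snd q)) |}.

Definition VasCat : VStruct := {| vcar := qcar V; vhom := qhom |}.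

Definition injective (X : VStruct) : Prop :=
  forall (A B : VStruct), is_vcat A -> is_vcat B ->
  forall i : A -> B, is_vfunctor A B i -> fully_faithful A B i ->
  forall f : A -> X, is_vfunctor A X f ->
  exists g : B -> X, is_vfunctor B X g /\ vfun_iso A X (fun a => g (i a)) f.

(* X x - : Cat(V) -> Cat(V) has a right adjoint, expressed through its
   universal arrows (couniversal counits): for every V-category Z there is a
   V-category Z^X and a V-functor ev : X x Z^X -> Z such that every V-functor
   f : X x Y -> Z factors as ev . (1_X x g) for a unique V-functor g : Y -> Z^X. *)
Definition exponentiable (X : VStruct) : Prop :=
  forall Z : VStruct, is_vcat Z ->
  exists (E : VStruct) (ev : vprod X E -> Z),
    is_vcat E /\ is_vfunctor (vprod X E) Z ev /\
    forall Y : VStruct, is_vcat Y ->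
    forall f : vprod X Y -> Z, is_vfunctor (vprod X Y) Z f ->
      (exists g : Y -> E, is_vfunctor Y E g /\
         forall (x : X) (y : Y), ev (x, g y) = f (x, y)) /\
      (forall g1 g2 : Y -> E, is_vfunctor Y E g1 -> is_vfunctor Y E g2 ->
         (forall (x : X) (y : Y), ev (x, g1 y) = f (x, y)) ->
         (forall (x : X) (y : Y), ev (x, g2 y) = f (x, y)) ->
         forall y : Y, g1 y = g2 y).

End QDefs.

(* A V-category X is exponentiable iff it satisfies [exp_condition]:
   hom(x0,x2) /\ (u (x) v) <= \/_x1 (hom(x0,x1) /\ u) (x) (hom(x1,x2) /\ v).
   Sufficiency: Z^X consists of the maps h : X -> Z with k <= [h,h], where
   [h,h'] is the largest e with hom(x,x') /\ e <= hom(hx,h'x'); it exists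
   because meets distribute over joins in a Heyting algebra, and the condition
   makes it transitive.  Necessity: glue three copies of X along u and v into a
   V-category Z, curry the inclusions X x {0 ->u 1} -> Z and X x {1 ->v 2} -> Z
   and evaluate at the composite arrow in Z^X.
   For (V, hom) at x0 = k the condition is exactly (i).  Conversely, an
   injective X is a retract of the presheaf category V^X along Yoneda, and (i)
   splits any u' (x) v' <= hom(x0,x2) through the image of hom(-,x0) (x) u'. *)
From Stdlib Require Import Setoid FunctionalExtensionality ProofIrrelevance.

Section QuantaleTheory.
Variable V : Quantale.
Local Notation "a <== b" := (qle V a b) (at level 70).
Local Notation "a ** b" := (qtensor V a b) (at level 40, left associativity).
Local Notation "a //\ b" := (qmeet V a b) (at level 45).
Local Notation k := (qk V).
Local Notation hom := (vhom V).

Lemma le_refl (a : V) : a <== a.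
Proof. apply qle_refl. Qed.

Lemma le_trans (a b c : V) : a <== b -> b <== c -> a <== c.
Proof. apply qle_trans. Qed.

Lemma sup_le (S : V -> Prop) c : (forall s, S s -> s <== c) -> qsup V S <== c.
Proof. apply qsup_least. Qed.

Lemma le_sup (S : V -> Prop) a s : S s -> a <== s -> a <== qsup V S.
Proof. intros Hs Has. apply le_trans with s; [exact Has | now apply qsup_ub]. Qed.

Definition bot : V := qsup V (fun _ => False).

Lemma tensor_sup_le a (S : V -> Prop) c :
  (forall s, S s -> a ** s <== c) -> a ** qsup V S <== c.
Proof. intros H. rewrite qtensor_sup. apply sup_le. intros z [s [Hs ->]]. auto. Qed.

Lemma tensor_monor a b b' : b <== b' -> a ** b <== a ** b'.
Proof.
  intros Hb.
  assert (Hsup : qsup V (fun z => z = b \/ z = b') = b').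
  { apply qle_antisym.
    - apply sup_le. intros s [-> | ->]; auto using le_refl.
    - apply qsup_ub. now right. }
  rewrite <- Hsup, qtensor_sup. apply qsup_ub. exists b. auto.
Qed.

Lemma tensor_monol a a' b : a <== a' -> a ** b <== a' ** b.
Proof. intros Ha. rewrite (qtensor_comm V a), (qtensor_comm V a'). now apply tensor_monor. Qed.

Lemma tensor_mono a a' b b' : a <== a' -> b <== b' -> a ** b <== a' ** b'.
Proof.
  intros Ha Hb. apply le_trans with (a' ** b); [now apply tensor_monol | now apply tensor_monor].
Qed.

Lemma tensor_unitr a : a ** k = a.
Proof. rewrite qtensor_comm. apply qtensor_unit. Qed.

Lemma tensor_botr a b c : b <== bot -> a ** b <== c.
Proof.
  intros Hb. apply le_trans with (a ** bot); [now apply tensor_monor|].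
  apply tensor_sup_le. intros _ [].
Qed.

Lemma tensor_botl a b c : a <== bot -> a ** b <== c.
Proof. intros Ha. rewrite qtensor_comm. now apply tensor_botr. Qed.

Lemma meet_lbl a b : a //\ b <== a.
Proof. apply sup_le. now intros s []. Qed.

Lemma meet_lbr a b : a //\ b <== b.
Proof. apply sup_le. now intros s []. Qed.

Lemma meet_glb a b w : w <== a -> w <== b -> w <== a //\ b.
Proof. intros. apply qsup_ub. auto. Qed.

Lemma meet_mono a a' b b' : a <== a' -> b <== b' -> a //\ b <== a' //\ b'.
Proof.
  intros. apply meet_glb.
  - apply le_trans with a; [apply meet_lbl | assumption].
  - apply le_trans with b; [apply meet_lbr | assumption].
Qed.

Lemma meet_comm a b : a //\ b = b //\ a.
Proof. apply qle_antisym; apply meet_glb; auto using meet_lbl, meet_lbr. Qed.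

Lemma meet_sup_le (HV : heyting V) a (S : V -> Prop) c :
  (forall s, S s -> a //\ s <== c) -> a //\ qsup V S <== c.
Proof.
  intros H. destruct (HV a c) as [h Hh]. rewrite meet_comm. apply Hh.
  apply sup_le. intros s Hs. apply Hh. rewrite meet_comm. auto.
Qed.

Lemma le_hom a b u : a ** u <== b -> u <== qhom V a b.
Proof. intros. now apply qsup_ub. Qed.

Lemma tensor_hom_le a b : a ** qhom V a b <== b.
Proof. apply tensor_sup_le. auto. Qed.

Lemma hom_unitl w : qhom V k w = w.
Proof.
  apply qle_antisym.
  - rewrite <- (qtensor_unit V (qhom V k w)). apply tensor_hom_le.
  - apply le_hom. rewrite qtensor_unit. apply le_refl.
Qed.

Lemma hom_antitone a a' b : a <== a' -> qhom V a' b <== qhom V a b.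
Proof.
  intros Ha. apply le_hom. apply le_trans with (a' ** qhom V a' b).
  - now apply tensor_monol.
  - apply tensor_hom_le.
Qed.

Lemma VasCat_vcat : is_vcat V (VasCat V).
Proof.
  split; simpl.
  - intros a. apply le_hom. rewrite tensor_unitr. apply le_refl.
  - intros a b c. apply le_hom. rewrite qtensor_assoc.
    apply le_trans with (b ** qhom V b c); [|apply tensor_hom_le].
    apply tensor_monol, tensor_hom_le.
Qed.

(* The left Kan extension b |-> \/_a f a (x) hom(i a, b). *)
Lemma VasCat_injective : injective V (VasCat V).
Proof.
  intros A B HA HB i _ Hff f Hf.
  exists (fun b => qsup V (fun z => exists a, z = f a ** hom B (i a) b)). split.
  - intros b b'. simpl. apply le_hom.
    rewrite qtensor_comm. apply tensor_sup_le. intros s [a ->].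
    apply le_sup with (f a ** hom B (i a) b'); [eauto|].
    rewrite qtensor_comm, <- qtensor_assoc. apply tensor_monor, HB.
  - split; intros a; simpl; apply le_hom; rewrite tensor_unitr.
    + apply sup_le. intros s [a' ->]. rewrite <- Hff.
      apply le_trans with (f a' ** qhom V (f a') (f a)); [apply tensor_monor, Hf|].
      apply tensor_hom_le.
    + apply le_sup with (f a ** hom B (i a) (i a)); [eauto|].
      rewrite <- Hff, <- (tensor_unitr (f a)) at 1. apply tensor_monor, HA.
Qed.

Definition split_sup (X : VStruct V) (u v : V) (x0 x2 : X) : V :=
  qsup V (fun z => exists x1, z = (hom X x0 x1 //\ u) ** (hom X x1 x2 //\ v)).

Lemma le_split_sup (X : VStruct V) u v (x0 x1 x2 : X) :
  (hom X x0 x1 //\ u) ** (hom X x1 x2 //\ v) <== split_sup X u v x0 x2.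
Proof. eapply le_sup; [eauto | apply le_refl]. Qed.

Definition exp_condition (X : VStruct V) : Prop :=
  forall (x0 x2 : X) (u v : V), hom X x0 x2 //\ (u ** v) <== split_sup X u v x0 x2.

Section FunctionCategory.
Variables (X Z : VStruct V).
Hypotheses (HV : heyting V) (HX : exp_condition X) (HZ : is_vcat V Z).

Definition fun_hom (h h' : X -> Z) : V :=
  qsup V (fun e => forall x x', hom X x x' //\ e <== hom Z (h x) (h' x')).

Lemma meet_fun_hom_le h h' x x' : hom X x x' //\ fun_hom h h' <== hom Z (h x) (h' x').
Proof. apply meet_sup_le; auto. Qed.

Lemma le_fun_hom h h' e :
  (forall x x', hom X x x' //\ e <== hom Z (h x) (h' x')) -> e <== fun_hom h h'.
Proof. intros. apply qsup_ub; auto. Qed.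

Definition fun_cat : VStruct V :=
  {| vcar := { h : X -> Z | k <== fun_hom h h };
     vhom := fun h h' => fun_hom (proj1_sig h) (proj1_sig h') |}.

Definition eval (p : vprod V X fun_cat) : Z := proj1_sig (snd p) (fst p).

Lemma fun_cat_vcat : is_vcat V fun_cat.
Proof.
  split.
  - intros [h Hh]. exact Hh.
  - intros [h Hh] [h' Hh'] [h'' Hh'']; simpl.
    apply le_fun_hom. intros x x''. eapply le_trans; [apply HX|].
    apply sup_le. intros s [x1 ->].
    apply le_trans with (hom Z (h x) (h' x1) ** hom Z (h' x1) (h'' x'')); [|apply HZ].
    apply tensor_mono; apply meet_fun_hom_le.
Qed.

Lemma eval_vfunctor : is_vfunctor V (vprod V X fun_cat) Z eval.
Proof. intros [x h] [x' h']. apply meet_fun_hom_le. Qed.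

Lemma curry_exists (Y : VStruct V) (f : vprod V X Y -> Z) :
  is_vcat V Y -> is_vfunctor V (vprod V X Y) Z f ->
  exists g : Y -> fun_cat, is_vfunctor V Y fun_cat g /\
    forall (x : X) (y : Y), eval (x, g y) = f (x, y).
Proof.
  intros HY Hf.
  assert (Hcur : forall y y', hom Y y y' <== fun_hom (fun x => f (x, y)) (fun x => f (x, y'))).
  { intros y y'. apply le_fun_hom. intros x x'. apply (Hf (x, y) (x', y')). }
  exists (fun y => exist _ (fun x => f (x, y)) (le_trans _ _ _ (proj1 HY y) (Hcur y y))).
  split; [exact Hcur | reflexivity].
Qed.

Lemma curry_unique (Y : VStruct V) (g1 g2 : Y -> fun_cat) :
  (forall (x : X) (y : Y), eval (x, g1 y) = eval (x, g2 y)) -> forall y, g1 y = g2 y.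
Proof.
  intros Heq y. destruct (g1 y) as [h1 H1] eqn:E1, (g2 y) as [h2 H2] eqn:E2.
  assert (h1 = h2) as <-.
  { apply functional_extensionality. intros x. specialize (Heq x y).
    unfold eval in Heq. now rewrite E1, E2 in Heq. }
  f_equal. apply proof_irrelevance.
Qed.

End FunctionCategory.

Lemma exp_condition_exponentiable (X : VStruct V) :
  heyting V -> exp_condition X -> exponentiable V X.
Proof.
  intros HV HX Z HZ. exists (fun_cat X Z), (eval X Z).
  split; [now apply fun_cat_vcat|]. split; [now apply eval_vfunctor|].
  intros Y HY f Hf. split.
  - now apply curry_exists.
  - intros g1 g2 _ _ H1 H2. apply curry_unique. intros x y. now rewrite H1, H2.
Qed.

Inductive three := T0 | T1 | T2.

Section GluedCategory.
Variables (X : VStruct V) (HX : is_vcat V X) (u v : V).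

(* Three copies of X joined by 0 ->u 1 ->v 2.  From copy 0 to copy 2 only the
   composites through copy 1 are kept, so evaluation on the exponential will
   have to push hom(x0,x2) /\ (u (x) v) below [split_sup]. *)
Definition glued_hom (p q : X * three) : V :=
  let h := hom X (fst p) (fst q) in
  match snd p, snd q with
  | T0, T0 | T1, T1 | T2, T2 => h //\ k
  | T0, T1 => h //\ u
  | T1, T2 => h //\ v
  | T0, T2 => split_sup X u v (fst p) (fst q)
  | _, _ => h //\ bot
  end.

Definition glued : VStruct V := {| vcar := (vcar V X * three)%type; vhom := glued_hom |}.

Lemma comp_unitl a b c t : (hom X a b //\ k) ** (hom X b c //\ t) <== hom X a c //\ t.
Proof.
  apply meet_glb.
  - apply le_trans with (hom X a b ** hom X b c); [|apply HX].
    apply tensor_mono; apply meet_lbl.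
  - rewrite <- (qtensor_unit V t) at 2. apply tensor_mono; apply meet_lbr.
Qed.

Lemma comp_unitr a b c t : (hom X a b //\ t) ** (hom X b c //\ k) <== hom X a c //\ t.
Proof.
  apply meet_glb.
  - apply le_trans with (hom X a b ** hom X b c); [|apply HX].
    apply tensor_mono; apply meet_lbl.
  - rewrite <- (tensor_unitr t) at 2. apply tensor_mono; apply meet_lbr.
Qed.

Lemma comp_split_supl a b c :
  (hom X a b //\ k) ** split_sup X u v b c <== split_sup X u v a c.
Proof.
  apply tensor_sup_le. intros s [x1 ->]. rewrite qtensor_assoc.
  eapply le_trans; [|apply le_split_sup]. apply tensor_monol, comp_unitl.
Qed.

Lemma comp_split_supr a b c :
  split_sup X u v a b ** (hom X b c //\ k) <== split_sup X u v a c.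
Proof.
  rewrite qtensor_comm. apply tensor_sup_le. intros s [x1 ->].
  rewrite qtensor_comm, <- qtensor_assoc.
  eapply le_trans; [|apply le_split_sup]. apply tensor_monor, comp_unitr.
Qed.

Lemma glued_vcat : is_vcat V glued.
Proof.
  split.
  - intros [x []]; apply meet_glb; apply HX || apply le_refl.
  - intros [a []] [b []] [c []]; simpl;
      first [ apply comp_unitl | apply comp_unitr | apply comp_split_supl
            | apply comp_split_supr | apply le_split_sup
            | apply tensor_botl, meet_lbr | apply tensor_botr, meet_lbr ].
Qed.

End GluedCategory.

Definition arrow_cat (t : V) : VStruct V :=
  {| vcar := bool;
     vhom := fun b b' => match b, b' with false, true => t | true, false => bot | _, _ => k end |}.

Lemma arrow_cat_vcat t : is_vcat V (arrow_cat t).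
Proof.
  split.
  - intros []; apply le_refl.
  - intros [] [] []; simpl;
      first [ rewrite qtensor_unit; apply le_refl | rewrite tensor_unitr; apply le_refl
            | apply tensor_botl, le_refl | apply tensor_botr, le_refl ].
Qed.

Definition unit_cat : VStruct V := {| vcar := unit; vhom := fun _ _ => k |}.

Lemma unit_cat_vcat : is_vcat V unit_cat.
Proof. split; intros; simpl; [|rewrite qtensor_unit]; apply le_refl. Qed.

Lemma exponentiable_exp_condition (X : VStruct V) :
  is_vcat V X -> exponentiable V X -> exp_condition X.
Proof.
  intros HX Hexp x0 x2 u v.
  destruct (Hexp (glued X u v) (glued_vcat X HX u v)) as [E [ev [HE [Hev Huniv]]]].
  pose (f01 := fun p : vprod V X (arrow_cat u) =>
                 (fst p, if snd p then T1 else T0) : glued X u v).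
  pose (f12 := fun p : vprod V X (arrow_cat v) =>
                 (fst p, if snd p then T2 else T1) : glued X u v).
  pose (f1 := fun p : vprod V X unit_cat => (fst p, T1) : glued X u v).
  destruct (proj1 (Huniv _ (arrow_cat_vcat u) f01 ltac:(intros [x []] [x' []]; apply le_refl)))
    as [g01 [Hg01 Hg01e]].
  destruct (proj1 (Huniv _ (arrow_cat_vcat v) f12 ltac:(intros [x []] [x' []]; apply le_refl)))
    as [g12 [Hg12 Hg12e]].
  assert (Hmid : g01 true = g12 false).
  { refine (proj2 (Huniv _ unit_cat_vcat f1 ltac:(intros ? ?; apply le_refl))
                  (fun _ => g01 true) (fun _ => g12 false) _ _ _ _ tt).
    - intros ? ?; apply HE.
    - intros ? ?; apply HE.
    - intros x t. now rewrite Hg01e.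
    - intros x t. now rewrite Hg12e. }
  assert (Huv : u ** v <== hom E (g01 false) (g12 true)).
  { apply le_trans with (hom E (g01 false) (g01 true) ** hom E (g01 true) (g12 true)); [|apply HE].
    apply tensor_mono; [apply (Hg01 false true)|].
    rewrite Hmid. apply (Hg12 false true). }
  pose proof (Hev (x0, g01 false) (x2, g12 true)) as Hev02. simpl in Hev02.
  rewrite Hg01e, Hg12e in Hev02.
  eapply le_trans; [|exact Hev02]. apply meet_mono; [apply le_refl | exact Huv].
Qed.

Definition meet_tensor_interp : Prop :=
  forall u v w : V,
    w //\ (u ** v) =
    qsup V (fun z => exists u' v' : V, u' <== u /\ v' <== v /\ u' ** v' <== w /\ z = u' ** v').

Section PresheafCategory.
Variables (X : VStruct V) (HX : is_vcat V X).

Definition presheaf_hom (p q : X -> V) : V :=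
  qsup V (fun w => forall z, w <== qhom V (p z) (q z)).

Lemma presheaf_hom_le p q z : presheaf_hom p q <== qhom V (p z) (q z).
Proof. apply sup_le. auto. Qed.

Lemma le_presheaf_hom p q w : (forall z, w <== qhom V (p z) (q z)) -> w <== presheaf_hom p q.
Proof. intros. apply qsup_ub. auto. Qed.

Definition presheaf_cat : VStruct V := {| vcar := X -> V; vhom := presheaf_hom |}.

Lemma presheaf_cat_vcat : is_vcat V presheaf_cat.
Proof.
  split; simpl.
  - intros p. apply le_presheaf_hom. intros z. apply VasCat_vcat.
  - intros p q r. apply le_presheaf_hom. intros z.
    apply le_trans with (qhom V (p z) (q z) ** qhom V (q z) (r z)); [|apply VasCat_vcat].
    apply tensor_mono; apply presheaf_hom_le.
Qed.

Definition yoneda (x : X) : presheaf_cat := fun z => hom X z x.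

Lemma yoneda_vfunctor : is_vfunctor V X presheaf_cat yoneda.
Proof. intros x x'. apply le_presheaf_hom. intros z. apply le_hom, HX. Qed.

Lemma yoneda_fully_faithful : fully_faithful V X presheaf_cat yoneda.
Proof.
  intros x x'. apply qle_antisym; [apply yoneda_vfunctor|].
  apply le_trans with (qhom V (hom X x x) (hom X x x')).
  { exact (presheaf_hom_le (yoneda x) (yoneda x') x). }
  rewrite <- (hom_unitl (hom X x x')) at 2. apply hom_antitone, HX.
Qed.

Lemma injective_exp_condition : meet_tensor_interp -> injective V X -> exp_condition X.
Proof.
  intros HI Hinj.
  destruct (Hinj X presheaf_cat HX presheaf_cat_vcat yoneda yoneda_vfunctor
                 yoneda_fully_faithful (fun x => x) (fun x y => le_refl _))
    as [r [Hr [Hry_le Hle_ry]]].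
  intros x0 x2 u v. rewrite HI. apply sup_le.
  intros s [u' [v' [Hu [Hv [Huv ->]]]]].
  pose (p := fun z => hom X z x0 ** u').
  eapply le_trans; [|apply (le_split_sup X u v x0 (r p) x2)].
  apply tensor_mono; apply meet_glb; trivial.
  - rewrite <- (qtensor_unit V u').
    apply le_trans with (hom X x0 (r (yoneda x0)) ** hom X (r (yoneda x0)) (r p)); [|apply HX].
    apply tensor_mono; [apply Hle_ry|].
    eapply le_trans; [|apply Hr]. apply le_presheaf_hom. intros z. apply le_hom, le_refl.
  - rewrite <- (tensor_unitr v').
    apply le_trans with (hom X (r p) (r (yoneda x2)) ** hom X (r (yoneda x2)) x2); [|apply HX].
    apply tensor_mono; [|apply Hry_le].
    eapply le_trans; [|apply Hr]. apply le_presheaf_hom. intros z.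
    apply le_hom. unfold p, yoneda. rewrite <- qtensor_assoc.
    eapply le_trans; [apply tensor_monor, Huv | apply HX].
Qed.

End PresheafCategory.

Lemma VasCat_exp_condition_interp : exp_condition (VasCat V) -> meet_tensor_interp.
Proof.
  intros HC u v w. apply qle_antisym.
  - specialize (HC k w u v). simpl in HC. rewrite hom_unitl in HC.
    eapply le_trans; [exact HC|]. apply sup_le. intros s [x1 ->].
    eapply le_sup; [do 2 eexists; repeat split; [apply meet_lbr | apply meet_lbr |] | apply le_refl].
    apply le_trans with (qhom V k w); [|rewrite hom_unitl; apply le_refl].
    eapply le_trans; [|apply (proj2 VasCat_vcat k x1 w)].
    apply tensor_mono; apply meet_lbl.
  - apply sup_le. intros s [u' [v' [Hu [Hv [Huv ->]]]]].
    apply meet_glb; [exact Huv | now apply tensor_mono].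
Qed.

End QuantaleTheory.

Theorem theorem4p3 (V : Quantale) (HV : heyting V) :
  ((forall u v w : V,
      qmeet V w (qtensor V u v) =
      qsup V (fun z => exists u' v' : V,
                qle V u' u /\ qle V v' v /\ qle V (qtensor V u' v') w /\
                z = qtensor V u' v'))
   <-> (forall X : VStruct V, is_vcat V X -> injective V X -> exponentiable V X))
  /\
  ((forall X : VStruct V, is_vcat V X -> injective V X -> exponentiable V X)
   <-> exponentiable V (VasCat V)).
Proof.
  assert (i_ii : meet_tensor_interp V ->
                 forall X, is_vcat V X -> injective V X -> exponentiable V X).
  { intros HI X HX Hinj.
    apply exp_condition_exponentiable; [exact HV|].
    now apply injective_exp_condition. }
  assert (ii_iii : (forall X, is_vcat V X -> injective V X -> exponentiable V X) ->
                   exponentiable V (VasCat V)).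
  { intros H. apply H; [apply VasCat_vcat | apply VasCat_injective]. }
  assert (iii_i : exponentiable V (VasCat V) -> meet_tensor_interp V).
  { intros Hexp. apply VasCat_exp_condition_interp.
    apply exponentiable_exp_condition; [apply VasCat_vcat | exact Hexp]. }
  unfold meet_tensor_interp in *. split; split; auto.
Qed.
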